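(* Let $d\ge1$ be an integer, $\gamma^2>0$, $\sigma^2\ge 0$, and let there be $I$ client types with data sizes $D_1,\dots,D_I>0$. Let $\mathcal{K}$ be a non-empty coalition of participants containing $K_i\ge 0$ participants of type $i$ for each $i\in\{1,\dots,I\}$, with $K=\sum_{i=1}^I K_i\ge 1$, and let $\varepsilon_{\mathcal{K}}$ denote its generalization error. Let $n\notin\mathcal{K}$ be a client with data size $D>0$ and let $\varepsilon_{\mathcal{K}\cup\{n\}}$ be the generalization error of the coalition $\mathcal{K}\cup\{n\}$. Define $$\eta=\frac{(2K+1)\sum_{i=1}^I K_i/D_i}{K^2}-\frac{(K+1)\sigma^2}{d\gamma^2K}.$$ Then $\varepsilon_{\mathcal{K}}-\varepsilon_{\mathcal{K}\cup\{n\}}\ge 0$ if and only if $1/D\le\eta$.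
   Context: For a finite non-empty coalition $\mathcal{S}$ of participants, where participant $k$ has data size $D_k$, with $S=|\mathcal{S}|$, the generalization error of the federated model trained by $\mathcal{S}$ is defined as $\varepsilon_{\mathcal{S}}=\frac{d\gamma^2}{S^2}\sum_{k\in\mathcal{S}}\frac{1}{D_k}+\frac{S-1}{S}\sigma^2$. Here $d$ is the feature dimension, $\gamma^2$ the data (target-noise) variance and $\sigma^2$ the client variance. The quantity $\varepsilon_{\mathcal{K}}-\varepsilon_{\mathcal{K}\cup\{n\}}$ is called the network effect of client $n$'s participation. *)

From mathcomp Require Import all_boot all_order all_algebra.
Set Implicit Arguments. Unset Strict Implicit. Unset Printing Implicit Defensive.
Import Order.TTheory GRing.Theory Num.Theory.
Local Open Scope ring_scope.

Definition gen_error (R : realFieldType) (P : finType) (d : nat) (gamma2 sigma2 : R)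
  (Dsz : P -> R) (A : {set P}) : R :=
  (d%:R * gamma2) / (#|A|%:R ^+ 2) * (\sum_(k in A) (Dsz k)^-1)
  + (#|A|%:R - 1) / #|A|%:R * sigma2.

From mathcomp Require Import all_boot all_order all_algebra.
From mathcomp Require Import ring.
Import Order.TTheory GRing.Theory Num.Theory.
Local Open Scope ring_scope.

(* Adding a client of data size D to a coalition of size k turns eps_K into
   eps_{K+n} = c/(k+1)^2 (S + 1/D) + k/(k+1) sigma2, with c = d gamma2 and
   S = sum_{k in K} 1/D_k.  Putting eps_K - eps_{K+n} over the positive
   factor c/(k+1)^2 leaves eta - 1/D, so the sign of the network effect is
   that of eta - 1/D; grouping the participants of K by type turns S into
   sum_i K_i/D_i. *)

Lemma sum_set_by_class {V : nmodType} {P T : finType} (cls : P -> T)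
    (F : T -> V) (K : {set P}) :
  \sum_(k in K) F (cls k) = \sum_(i : T) F i *+ #|[set k in K | cls k == i]|.
Proof.
rewrite (partition_big cls xpredT) //=; apply: eq_bigr => i _.
rewrite (eq_bigr (fun _ => F i)); last by move=> k /andP[_ /eqP ->].
by rewrite -big_set sumr_const.
Qed.

Section NetworkEffect.

Context {R : realFieldType} {P : finType}.
Variables (d : nat) (gamma2 sigma2 : R).
Variable Dsz : P -> R.

Local Notation eps := (gen_error d gamma2 sigma2 Dsz).

Definition network_effect (K : {set P}) (n : P) : R := eps K - eps (n |: K).

Definition network_effect_threshold (K : {set P}) : R :=
  let k : R := #|K|%:R in
  (2 * k + 1) * (\sum_(j in K) (Dsz j)^-1) / k ^+ 2
  - (k + 1) * sigma2 / (d%:R * gamma2 * k).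

Hypothesis dgamma2_gt0 : 0 < d%:R * gamma2.

Lemma network_effectE (K : {set P}) (n : P) :
  (0 < #|K|)%N -> n \notin K ->
  network_effect K n = d%:R * gamma2 / (#|K|%:R + 1) ^+ 2
                       * (network_effect_threshold K - (Dsz n)^-1).
Proof.
move=> K_gt0 nK; rewrite /network_effect /network_effect_threshold /gen_error.
rewrite cardsU1 nK big_setU1 //= add1n -addn1 natrD.
have k_gt0 : 0 < #|K|%:R :> R by rewrite ltr0n.
have k1_gt0 : 0 < #|K|%:R + 1 :> R by rewrite addr_gt0.
(* Keeping 1/D_n as an atom spares [field] the side condition D_n != 0. *)
move: dgamma2_gt0; set c := d%:R * gamma2; set x := (Dsz n)^-1 => c_gt0.
by field; rewrite !lt0r_neq0.
Qed.

Lemma network_effect_ge0 (K : {set P}) (n : P) :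
  (0 < #|K|)%N -> n \notin K ->
  (0 <= network_effect K n) <-> (Dsz n)^-1 <= network_effect_threshold K.
Proof.
move=> K_gt0 nK; rewrite network_effectE // pmulr_rge0 ?subr_ge0 //.
by rewrite divr_gt0 // exprn_gt0 // addr_gt0 ?ltr0n.
Qed.

End NetworkEffect.

Theorem theorem1 (R : realFieldType) (d : nat) (gamma2 sigma2 : R)
  (I : nat) (Dtype : 'I_I -> R)
  (P : finType) (Dsz : P -> R) (typ : P -> 'I_I)
  (K : {set P}) (n : P) (D : R) :
  (1 <= d)%N -> 0 < gamma2 -> 0 <= sigma2 ->
  (forall i, 0 < Dtype i) ->
  (0 < #|K|)%N ->
  (forall k, k \in K -> Dsz k = Dtype (typ k)) ->
  n \notin K -> Dsz n = D -> 0 < D ->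
  let Ki := fun i : 'I_I => #|[set k in K | typ k == i]| in
  let Kc : R := #|K|%:R in
  let eta := (2 * Kc + 1) * (\sum_(i < I) (Ki i)%:R / Dtype i) / (Kc ^+ 2)
             - (Kc + 1) * sigma2 / (d%:R * gamma2 * Kc) in
  (0 <= gen_error d gamma2 sigma2 Dsz K - gen_error d gamma2 sigma2 Dsz (n |: K))
  <-> D^-1 <= eta.
Proof.
move=> d_ge1 gamma2_gt0 _ _ K_gt0 DszK nK <- _ Ki Kc eta.
have dgamma2_gt0 : 0 < d%:R * gamma2 :> R by rewrite mulr_gt0 ?ltr0n.
have sum_by_type : \sum_(k in K) (Dsz k)^-1 = \sum_(i < I) (Ki i)%:R / Dtype i.
  rewrite (eq_bigr (fun k => (Dtype (typ k))^-1)); last by move=> k /DszK ->.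
  rewrite (sum_set_by_class typ (fun i => (Dtype i)^-1)).
  by apply: eq_bigr => i _; rewrite mulr_natl.
have -> : eta = network_effect_threshold d gamma2 sigma2 Dsz K.
  by rewrite /network_effect_threshold sum_by_type.
exact: network_effect_ge0.
Qed.
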